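(* Let $Q=\sum_{j=1}^n q_j(z)\partial/\partial z_j$ be a weighted homogeneous holomorphic polynomial vector field on $\mathbb{C}^n$ with $Q(0)=0$, and suppose $S$ is a nontrivial orbit of $Q$ with $0\in\bar S$ and $Q\neq0$ on $S$. Let $\nu$ be a real number and $\alpha$ a positive integer. If $Q^\alpha p^{(\nu)}=0$ on $\mathbb{C}^n$, then $p^{(\nu)}|_S=0$.
   Context: Weights $\delta_j=1/(2m_j)$ ($m_j$ positive integers) on $z_1,\dots,z_n$; $\mathrm{wt}(z^J)=\sum j_k\delta_k$, $\mathrm{wt}(z^A\bar z^B)=\mathrm{wt}\,A+\mathrm{wt}\,B$; a polynomial or vector field is homogeneous of weight $\mu$ if all monomials of the polynomial (resp. of $q_j$) have weight $\mu$ (resp. $\mu-\delta_j$). Standing assumption: $p(z,\bar z)=\sum c_{A,B}z^A\bar z^B$ is a real polynomial, homogeneous of weight 1, containing no purely holomorphic or purely antiholomorphic monomials ($c_{A,B}\ne0\Rightarrow A\ne0,B\neq0$). The signature of $z^A\bar z^B$ is $\mathrm{wt}\,A-\mathrm{wt}\,B$, and $p^{(\nu)}=\sum_{\mathrm{wt}A-\mathrm{wt}B=\nu}c_{A,B}z^A\bar z^B=\sum_B f_{\nu,B}(z)\bar z^B$ with $f_{\nu,B}$ holomorphic polynomials. $Q$ acts on polynomials in $z,\bar z$ by differentiation in $z$ only: $Q(f\bar z^B)=(Qf)\bar z^B$. An orbit of $Q$ is the image $\varphi(\mathcal{D})$ of an integral curve $\varphi:\mathcal{D}\to\mathbb{C}^n$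 ($\dot\varphi=Q(\varphi)$) on a maximal domain $\mathcal{D}\subset\mathbb{C}$. *)

From HB Require Import structures.
From mathcomp Require Import all_boot all_order all_algebra.
From mathcomp Require Import complex.
From mathcomp Require Import all_classical all_reals all_analysis.
From mathcomp Require mpoly.
Import (canonicals, coercions) mpoly.
Set Implicit Arguments. Unset Strict Implicit. Unset Printing Implicit Defensive.
Import Order.TTheory GRing.Theory Num.Theory.
Import numFieldNormedType.Exports.
Local Open Scope classical_set_scope.
Local Open Scope ring_scope.

(* the complex numbers C = R[i], seen as a numClosedFieldType so that the
   normed-space (topology, derivative) instances of mathcomp-analysis apply *)
Definition CC (R : realType) : numClosedFieldType := R[i].

Section Defs.
Variables (R : realType) (n : nat).
Local Notation C := (CC R).
Local Notation hpoly := (mpoly.mpoly n C).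
(* polynomials in z_1..z_n, zbar_1..zbar_n: variable lshift n i is z_i,
   variable rshift n i is zbar_i *)
Local Notation zpoly := (mpoly.mpoly (n + n) C).

Definition delta (m : 'I_n -> nat) (j : 'I_n) : R := ((2 * m j)%N%:R)^-1.

Definition wt (m : 'I_n -> nat) (J : mpoly.multinom n) : R :=
  \sum_(k < n) (J k)%:R * delta m k.

Definition wtz (m : 'I_n -> nat) (AB : mpoly.multinom (n + n)) : R :=
  \sum_(k < n) (AB (lshift n k))%:R * delta m k.
Definition wtzb (m : 'I_n -> nat) (AB : mpoly.multinom (n + n)) : R :=
  \sum_(k < n) (AB (rshift n k))%:R * delta m k.

Definition vf_homogeneous (m : 'I_n -> nat) (Q : 'I_n -> hpoly) (mu : R) :=
  forall j (J : mpoly.multinom n), J \in mpoly.msupp (Q j) -> wt m J = mu - delta m j.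

Definition weighted_homogeneous_vf (m : 'I_n -> nat) (Q : 'I_n -> hpoly) :=
  exists mu : R, vf_homogeneous m Q mu.

Definition heval (f : hpoly) (z : 'rV[C]_n) : C := mpoly.meval (fun i => z ord0 i) f.

Definition Qvec (Q : 'I_n -> hpoly) (z : 'rV[C]_n) : 'rV[C]_n :=
  \row_j heval (Q j) z.

Definition zeval (p : zpoly) (z : 'rV[C]_n) : C :=
  mpoly.meval (fun k => match @fintype.split n n k with
                        | inl i => z ord0 i
                        | inr i => (z ord0 i)^* end) p.

Definition liftz (f : hpoly) : zpoly :=
  mpoly.mmap (@mpoly.mpolyC (n + n) C)
    (fun i => mpoly.mpolyX C (mpoly.mnm1 (lshift n i))) f.

Definition Qact (Q : 'I_n -> hpoly) (p : zpoly) : zpoly :=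
  \sum_(j < n) liftz (Q j) * mpoly.mderiv (lshift n j) p.

Definition real_poly (p : zpoly) := forall z : 'rV[C]_n, zeval p z \is Num.real.
Definition homogeneous_wt1 (m : 'I_n -> nat) (p : zpoly) :=
  forall AB, AB \in mpoly.msupp p -> wtz m AB + wtzb m AB = 1.
Definition no_pure_terms (p : zpoly) :=
  forall AB : mpoly.multinom (n + n), AB \in mpoly.msupp p ->
    (exists i, AB (lshift n i) != 0%N) /\ (exists i, AB (rshift n i) != 0%N).

Definition psig (m : 'I_n -> nat) (p : zpoly) (nu : R) : zpoly :=
  \sum_(AB <- mpoly.msupp p | wtz m AB - wtzb m AB == nu)
     mpoly.mcoeff AB p *: mpoly.mpolyX C AB.

Definition integral_curve (Q : 'I_n -> hpoly) (D : set C) (phi : C -> 'rV[C]_n) :=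
  [/\ open D, connected D, D !=set0 &
      forall t, D t -> is_derive t (1 : C) phi (Qvec Q (phi t))].

Definition maximal_integral_curve (Q : 'I_n -> hpoly) (D : set C) (phi : C -> 'rV[C]_n) :=
  integral_curve Q D phi /\
  forall (D' : set C) (psi : C -> 'rV[C]_n), integral_curve Q D' psi ->
    D `<=` D' -> (forall t, D t -> phi t = psi t) -> D' `<=` D.

Definition Qorbit (Q : 'I_n -> hpoly) (S : set 'rV[C]_n) :=
  exists (D : set C) (phi : C -> 'rV[C]_n),
    maximal_integral_curve Q D phi /\ S = phi @` D.

Definition nontrivial (S : set 'rV[C]_n) := ~ exists x, S = [set x].

End Defs.

From HB Require Import structures.
From mathcomp Require Import all_boot all_order all_algebra.
From mathcomp Require Import complex.
From mathcomp Require Import all_classical all_reals all_analysis.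
From mathcomp Require mpoly.
From mathcomp Require Import ring.
Import (canonicals, coercions) mpoly.
Import Order.TTheory GRing.Theory Num.Theory.
Import numFieldNormedType.Exports.
Local Open Scope classical_set_scope.
Local Open Scope ring_scope.
Set Implicit Arguments. Unset Strict Implicit. Unset Printing Implicit Defensive.

(* Freeze the antiholomorphic variables at a point w of S: f_w(z) := f(z, conj w)
   is holomorphic in z, and along an integral curve phi of Q the derivative of
   f_w o phi is (Q f)_w o phi.  So if (Q^(k+1) p^(nu))_w vanishes on S, then
   (Q^k p^(nu))_w is constant on S (the domain of phi is connected), and by
   continuity the constant is its value at 0, a point of the closure of S; that
   value is 0, for k = 0 because p has no purely antiholomorphic monomials, for
   k > 0 because Q(0) = 0.  Descending from k = alpha to k = 0 and evaluating at
   z = w gives p^(nu)(w, conj w) = 0. *)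

Lemma mpoly_ring_ind (k : nat) (K : nzRingType) (P : mpoly.mpoly k K -> Prop) :
  (forall c, P (mpoly.mpolyC k c)) ->
  (forall p q, P p -> P q -> P (p + q)) ->
  (forall p q, P p -> P q -> P (p * q)) ->
  (forall i, P (mpoly.mpolyX K (mpoly.mnm1 i))) ->
  forall p, P p.
Proof.
move=> PC PD PM PX p; have P1 : P 1 by rewrite -mpoly.mpolyC1.
rewrite (mpoly.mpolyE p); apply: (big_ind P) => //; first by rewrite -mpoly.mpolyC0.
move=> m _; rewrite -mpoly.mul_mpolyC mpoly.mpolyXE_id; apply: (PM) => //.
apply: (big_ind P) => // i _; elim: (m i) => [|e IH]; first by rewrite expr0.
by rewrite exprS; apply: PM.
Qed.

Lemma connected_locally_constant (T : topologicalType) (U : Type) (D : set T)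
    (f : T -> U) :
  connected D -> (forall x, D x -> \forall y \near x, f y = f x) ->
  forall x y, D x -> D y -> f y = f x.
Proof.
move=> cD f_loc x y Dx Dy; pose E := [set z | f z = f x].
suff DE : D `&` E = D by have [] : (D `&` E) y by rewrite DE.
apply: cD; first by exists x.
- exists E°; first exact: open_interior.
  apply/seteqP; split=> [z [Dz Ez]|z [Dz /interior_subset Ez]]; split=> //.
  by apply: filterS (f_loc z Dz) => u; rewrite /E /= => ->.
- exists (~` (~` E)°); first exact/open_closedC/open_interior.
  apply/seteqP; split=> [z [Dz Ez]|z [Dz nEz]]; split=> //.
    by move=> /interior_subset.
  apply: contrapT => nEz'; apply: nEz.
  by apply: filterS (f_loc z Dz) => u; rewrite /E /= => ->.
Qed.

Lemma cvg_is_derive (K : numFieldType) (V W : normedModType K) (f : V -> W) x v l :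
  (fun h : K => h^-1 *: ((f \o shift x) (h *: v) - f x)) @ 0^' --> l ->
  is_derive x v f l.
Proof. by move=> fl; apply: DeriveDef; [apply/cvg_ex; exists l | exact: cvg_lim fl]. Qed.

Lemma is_derive_mxcoord (K : numFieldType) (V : normedModType K) p q
    (g : V -> 'M[K]_(p, q)) x v d i j :
  is_derive x v g d -> is_derive x v (fun y => g y i j) (d i j).
Proof.
move=> [/cvg_ex[l gl] <-]; have -> : 'D_v g x = l by exact: cvg_lim gl.
apply: cvg_is_derive.
have := cvg_comp _ _ gl (@coord_continuous K p q i j l).
apply: cvg_trans; apply: near_eq_cvg.
by near=> h; rewrite /= !mxE.
Unshelve. all: by end_near. Qed.

Section ComplexCalculus.
Variable R : realType.
Local Notation C := (CC R).
Local Open Scope complex_scope.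
Local Notation Re := complex.Re. (* unqualified [Re] is a lemma of [Num.Theory] *)

Lemma normc_real (h : R) : `|h%:C : C| = `|h|%:C.
Proof. by rewrite normc_def /= expr0n addr0 sqrtr_sqr. Qed.

Lemma continuous_real_complex : continuous (fun h : R => h%:C : C).
Proof.
move=> h0; apply/cvgrPdist_lt => e e0.
have e_real : e \is Num.real by exact: gtr0_real.
have Re_e0 : 0 < Re e by rewrite -ltcR RRe_real.
near=> h; rewrite -rmorphB normc_real -(RRe_real e_real) ltcR.
by near: h; exact: cvgr_dist_lt.
Unshelve. all: by end_near. Qed.

Lemma ReB (z z' : C) : Re (z - z') = Re z - Re z'.
Proof. by move: z z' => [? ?] [? ?]. Qed.

Lemma continuous_Re : continuous (fun z : C => Re z).
Proof.
move=> z0; apply/(@cvgrPdist_lt _ _ _ _ (nbhs_filter z0)) => e e0; apply/nbhs_ballP.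
exists e%:C => [|z z0z]; first by rewrite /= ltcR.
by rewrite -ReB -ltcR; exact: le_lt_trans (normc_ge_Re _) z0z.
Qed.

Lemma Re_realcM (k : R) (z : C) : Re (k%:C * z) = k * Re z.
Proof. by case: z => ? ? /=; rewrite mul0r subr0. Qed.

Lemma cvg_real_complex_dnbhs : (fun h : R => h%:C : C) @ 0^' --> (0 : C)^'.
Proof.
move=> P P0; have := @continuous_real_complex 0 _ P0; rewrite !nbhs_simpl /=.
rewrite /dnbhs /within /=; apply: filterS => h Ph h0; apply: Ph.
by rewrite eq_complex /= (negbTE h0).
Qed.

Lemma is_derive_Re_line (F : C -> C) (a u : C) (s : R) :
  derivable F (a + s%:C * u) 1 ->
  is_derive s 1 (fun r : R => Re (F (a + r%:C * u)))
    (Re (u * 'D_1 F (a + s%:C * u))).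
Proof.
set x := a + s%:C * u => /derivable1_diffP dF.
have Fu : (fun k : C => k^-1 *: ((F \o shift x) (k *: u) - F x)) @ 0^' --> u * 'D_1 F x.
  have -> : u * 'D_1 F x = 'D_u F x.
    by rewrite !deriveE // -[in RHS](mulr1 u) -[u * 1]/(u *: 1) linearZ.
  exact: diff_derivable.
apply: cvg_is_derive.
have := cvg_comp _ _ (cvg_comp _ _ cvg_real_complex_dnbhs Fu) (@continuous_Re _).
apply: cvg_trans; apply: near_eq_cvg; near=> h => /=.
rewrite -fmorphV [_ *: _]/(_ * _) Re_realcM ReB [h^-1 *: _]/(_ * _).
congr (_ * (Re (F _) - _)).
by rewrite /x [_ *: u]/(_ * _) addrCA -mulrDl -[h%:A]/(h * 1) mulr1 -rmorphD.
Unshelve. all: by end_near. Qed.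

(* The mean value theorem fails for complex-valued maps: restrict F to the real
   segment from a to b and apply it to the real part. *)
Lemma derive0_ball_Re (F : C -> C) (a r b : C) :
  (forall z, ball a r z -> is_derive z 1 F 0) -> ball a r b -> Re (F b) = Re (F a).
Proof.
move=> F'0 ab; pose u := b - a; pose g y := Re (F (a + y%:C * u)).
have g'0 (y : R) : 0 <= y <= 1 -> is_derive y 1 g 0.
  move=> /andP[y0 y1]; have /F'0[dF dF0] : ball a r (a + y%:C * u).
    rewrite /ball /= opprD addrA subrr add0r normrN normrM normc_real.
    apply: le_lt_trans (_ : `|u| < r); last by rewrite distrC.
    by apply: ler_piMl => //; rewrite -[1]/((1 : R)%:C) lecR ger0_norm.
  by apply: is_derive_eq (is_derive_Re_line dF) _; rewrite dF0 mulr0.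
have g'0_itv (y : R) : y \in `]0, 1[ -> is_derive y 1 g ((fun=> 0) y).
  by rewrite in_itv /= => /andP[y0 y1]; apply: g'0; rewrite !ltW.
have g_cont : {within `[0 : R, 1], continuous g}.
  apply: continuous_in_subspaceT => y; rewrite inE /= in_itv /= => /g'0[dg _].
  exact/differentiable_continuous/derivable1_diffP.
have [c _] := MVT ltr01 g'0_itv g_cont.
rewrite mul0r => /eqP; rewrite subr_eq0 /g /u => /eqP.
by rewrite mul1r addrC subrK mul0r addr0.
Qed.

Lemma derive0_ball_const (F : C -> C) (a r b : C) :
  (forall z, ball a r z -> is_derive z 1 F 0) -> ball a r b -> F b = F a.
Proof.
move=> F'0 ab; have iF'0 z : ball a r z -> is_derive z 1 (F * cst ('i%C : C)) 0.
  move=> /F'0 F'z.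
  apply: is_derive_eq (is_deriveM F'z (is_derive_cst ('i%C : C) z 1)) _.
  by rewrite !scaler0 addr0.
have /= := derive0_ball_Re iF'0 ab; rewrite !ReiNIm => /oppr_inj ImFba.
by apply/eqP; rewrite eq_complex (derive0_ball_Re F'0 ab) ImFba !eqxx.
Qed.

Lemma derive0_connected_const (D : set C) (F : C -> C) : open D -> connected D ->
  (forall t, D t -> is_derive t 1 F 0) -> forall s t, D s -> D t -> F t = F s.
Proof.
move=> oD cD F'0; apply: connected_locally_constant cD _ => s Ds.
have /nbhs_ballP[r r0 sD] : nbhs s D by apply: open_nbhs_nbhs; split.
apply/nbhs_ballP; exists r => // t st.
by apply: derive0_ball_const st => z /sD; exact: F'0.
Qed.
End ComplexCalculus.

Section PolarizedEvaluation.
Variables (R : realType) (n : nat).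
Local Notation C := (CC R).
Local Notation zpoly := (mpoly.mpoly (n + n) C).
Local Notation Xz i := (mpoly.mpolyX C (mpoly.mnm1 (lshift n i))).
Local Notation Xzbar i := (mpoly.mpolyX C (mpoly.mnm1 (rshift n i))).
Local Notation dz j := (mpoly.mderiv (lshift n j)).

Definition zvar (x w : 'rV[C]_n) (k : 'I_(n + n)) : C :=
  match fintype.split k with inl i => x ord0 i | inr i => (w ord0 i)^* end.

Definition zeval2 (p : zpoly) (x w : 'rV[C]_n) : C := mpoly.meval (zvar x w) p.

Lemma zeval2_diag p z : zeval2 p z z = zeval p z.
Proof. by []. Qed.

Lemma zeval2C c x w : zeval2 (mpoly.mpolyC _ c) x w = c.
Proof. exact: mpoly.mevalC. Qed.

Lemma zeval2D p q x w : zeval2 (p + q) x w = zeval2 p x w + zeval2 q x w.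
Proof. exact: mpoly.mevalD. Qed.

Lemma zeval2M p q x w : zeval2 (p * q) x w = zeval2 p x w * zeval2 q x w.
Proof. exact: mpoly.mevalM. Qed.

Lemma zeval2_Xz i x w : zeval2 (Xz i) x w = x ord0 i.
Proof. by rewrite /zeval2 mpoly.mevalXU /zvar (unsplitK (inl _ i)). Qed.

Lemma zeval2_Xzbar i x w : zeval2 (Xzbar i) x w = (w ord0 i)^*.
Proof. by rewrite /zeval2 mpoly.mevalXU /zvar (unsplitK (inr _ i)). Qed.

Lemma zeval2_dzX j k x w :
  zeval2 (dz j (mpoly.mpolyX C (mpoly.mnm1 k))) x w = (k == lshift n j)%:R.
Proof.
rewrite mpoly.mderivX /zeval2 mpoly.mevalZ mpoly.mnm1E.
have [->|] := eqVneq k (lshift n j); last by rewrite mul0r.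
by rewrite -{1}[mpoly.mnm1 _]mpoly.add0m mpoly.addmK mpoly.mpolyX0 mpoly.meval1 mulr1.
Qed.

Lemma continuous_zeval2 p w : continuous (zeval2 p ^~ w).
Proof.
elim/mpoly_ring_ind: p => [c|p q cp cq|p q cp cq|k].
- have -> : zeval2 (mpoly.mpolyC _ c) ^~ w = cst c by apply/funext => x; exact: zeval2C.
  exact: cst_continuous.
- have -> : zeval2 (p + q) ^~ w = zeval2 p ^~ w + zeval2 q ^~ w.
    by apply/funext => x; exact: zeval2D.
  by move=> x; apply: continuousD; [exact: cp | exact: cq].
- have -> : zeval2 (p * q) ^~ w = zeval2 p ^~ w \* zeval2 q ^~ w.
    by apply/funext => x; exact: zeval2M.
  by move=> x; apply: continuousM; [exact: cp | exact: cq].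
rewrite -(splitK k); case: fintype.split => i /=.
- have -> : zeval2 (Xz i) ^~ w = fun x => x ord0 i.
    by apply/funext => x; exact: zeval2_Xz.
  exact: (@coord_continuous C 1 n ord0 i).
- have -> : zeval2 (Xzbar i) ^~ w = cst (w ord0 i)^*.
    by apply/funext => x; exact: zeval2_Xzbar.
  by move=> x; exact: cst_continuous.
Qed.

Lemma is_derive_zeval2 (g : C -> 'rV[C]_n) (t : C) (d w : 'rV[C]_n) (p : zpoly) :
  is_derive t 1 g d ->
  is_derive t 1 (fun s => zeval2 p (g s) w)
    (\sum_(j < n) d ord0 j * zeval2 (dz j p) (g t) w).
Proof.
move=> g'; elim/mpoly_ring_ind: p => [c|p q p' q'|p q p' q'|k].
- have -> : (fun s => zeval2 (mpoly.mpolyC _ c) (g s) w) = cst c.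
    by apply/funext => s; exact: zeval2C.
  apply: is_derive_eq; rewrite big1 // => j _.
  by rewrite mpoly.mderivC /zeval2 mpoly.meval0 mulr0.
- have -> : (fun s => zeval2 (p + q) (g s) w) =
            (fun s => zeval2 p (g s) w) + (fun s => zeval2 q (g s) w).
    by apply/funext => s; exact: zeval2D.
  apply: is_derive_eq; rewrite -big_split; apply: eq_bigr => j _.
  by rewrite mpoly.mderivD zeval2D mulrDr.
- have -> : (fun s => zeval2 (p * q) (g s) w) =
            (fun s => zeval2 p (g s) w) * (fun s => zeval2 q (g s) w).
    by apply/funext => s; exact: zeval2M.
  apply: is_derive_eq; rewrite !scaler_sumr -big_split; apply: eq_bigr => j _.
  rewrite mpoly.mderivM zeval2D !zeval2M /GRing.scale /=; ring.
rewrite -(splitK k); case: fintype.split => i /=.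
- have -> : (fun s => zeval2 (Xz i) (g s) w) = fun s => g s ord0 i.
    by apply/funext => s; exact: zeval2_Xz.
  apply: is_derive_eq (is_derive_mxcoord ord0 i g') _.
  rewrite (bigD1 i) //= zeval2_dzX eqxx mulr1 big1 ?addr0 // => j ji.
  by rewrite zeval2_dzX (inj_eq (@lshift_inj _ _)) eq_sym (negbTE ji) mulr0.
- have -> : (fun s => zeval2 (Xzbar i) (g s) w) = cst (w ord0 i)^*.
    by apply/funext => s; exact: zeval2_Xzbar.
  apply: is_derive_eq; rewrite big1 // => j _.
  by rewrite zeval2_dzX eq_sym eq_lrshift mulr0.
Qed.

Lemma zeval2_liftz f x w : zeval2 (liftz f) x w = heval f x.
Proof.
rewrite /zeval2 /liftz /heval /mpoly.mmap raddf_sum [RHS]mpoly.mevalE /=.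
apply: eq_bigr => m _; rewrite mpoly.mevalM mpoly.mevalC /mpoly.mmap1 rmorph_prod /=.
congr (_ * _); apply: eq_bigr => i _.
by rewrite rmorphXn /= -/(zeval2 (Xz i) x w) zeval2_Xz.
Qed.

Lemma zeval2_Qact Q p x w :
  zeval2 (Qact Q p) x w = \sum_(j < n) Qvec Q x ord0 j * zeval2 (dz j p) x w.
Proof.
rewrite /zeval2 /Qact raddf_sum /=; apply: eq_bigr => j _.
by rewrite mpoly.mevalM -/(zeval2 (liftz _) x w) zeval2_liftz mxE.
Qed.

Lemma is_derive_zeval2_integral_curve Q (phi : C -> 'rV[C]_n) (t : C) w p :
  is_derive t 1 phi (Qvec Q (phi t)) ->
  is_derive t 1 (fun s => zeval2 p (phi s) w) (zeval2 (Qact Q p) (phi t) w).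
Proof. by move=> /(is_derive_zeval2 w p); rewrite zeval2_Qact. Qed.

Lemma zeval2_Qact_at0 Q p w :
  (forall j, heval (Q j) 0 = 0) -> zeval2 (Qact Q p) 0 w = 0.
Proof. by move=> Q0; rewrite zeval2_Qact big1 // => j _; rewrite mxE Q0 mul0r. Qed.

Lemma zeval2_psig_at0 m p nu w : no_pure_terms p -> zeval2 (psig m p nu) 0 w = 0.
Proof.
move=> npure; rewrite /zeval2 /psig raddf_sum /= big_seq_cond big1 //.
move=> AB /andP[/npure[[i ABi] _] _].
rewrite mpoly.mevalZ mpoly.mevalX (bigD1 (lshift n i)) //= /zvar (unsplitK (inl _ i)) mxE.
by rewrite expr0n (negbTE ABi) mul0r mulr0.
Qed.

Lemma zeval2_eq0_on_orbit Q (D : set C) (phi : C -> 'rV[C]_n) p w :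
  open D -> connected D -> (forall t, D t -> is_derive t 1 phi (Qvec Q (phi t))) ->
  closure (phi @` D) 0 -> zeval2 p 0 w = 0 ->
  (forall t, D t -> zeval2 (Qact Q p) (phi t) w = 0) ->
  forall t, D t -> zeval2 p (phi t) w = 0.
Proof.
move=> oD cD phi' cl0 p0 Qp0 t Dt.
have level_set : phi @` D `<=` zeval2 p ^~ w @^-1` [set zeval2 p (phi t) w].
  move=> _ [s Ds <-] /=.
  apply: (derive0_connected_const (F := fun s => zeval2 p (phi s) w) oD cD) => // u Du.
  apply: is_derive_eq (is_derive_zeval2_integral_curve w p (phi' u Du)) _.
  exact: Qp0.
have closed_pt : closed [set zeval2 p (phi t) w].
  apply: accessible_closed_set1; apply: hausdorff_accessible; exact: norm_hausdorff.
have /= <- := preimage_closed (fun x _ => @continuous_zeval2 p w x) closed_pt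
  (closureS level_set cl0).
exact: p0.
Qed.

End PolarizedEvaluation.

Theorem lemma2p3 (R : realType) (n : nat) (m : 'I_n -> nat)
    (p : mpoly.mpoly (n + n) (CC R)) (Q : 'I_n -> mpoly.mpoly n (CC R))
    (S : set 'rV[CC R]_n) (nu : R) (alpha : nat) :
  (forall j, (0 < m j)%N) ->
  real_poly p -> homogeneous_wt1 m p -> no_pure_terms p ->
  weighted_homogeneous_vf m Q ->
  (forall j, heval (Q j) 0 = 0) ->
  Qorbit Q S -> nontrivial S -> closure S 0 ->
  (forall x, S x -> Qvec Q x != 0) ->
  (0 < alpha)%N ->
  iter alpha (Qact Q) (psig m p nu) = 0 ->
  forall z, S z -> zeval (psig m p nu) z = 0.
Proof.
move=> _ _ _ npure _ Q0 [D [phi [[[oD cD _ phi'] _] ->]]] _ cl0 _ _ Qp0 _ [t0 Dt0 <-].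
rewrite -zeval2_diag; set w := phi t0.
suff vanish k : (k <= alpha)%N ->
    forall t, D t -> zeval2 (iter (alpha - k) (Qact Q) (psig m p nu)) (phi t) w = 0.
  by have := vanish alpha (leqnn _) t0 Dt0; rewrite subnn.
elim: k => [_ t _|k IH lt_k_alpha]; first by rewrite subn0 Qp0 /zeval2 mpoly.meval0.
apply: zeval2_eq0_on_orbit oD cD phi' cl0 _ _.
- case: (alpha - k.+1)%N => [|j]; first exact: zeval2_psig_at0.
  exact: zeval2_Qact_at0.
- by move=> s Ds; rewrite -iterS -subSn //; exact: IH (ltnW _) s Ds.
Qed.
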